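(* Let $g_i:\mathbb{R}^n\to\mathbb{R}$ ($i=1,\dots,p$) and $h_j:\mathbb{R}^n\to\mathbb{R}$ ($j=p+1,\dots,q$) be locally Lipschitz, and let $\{g^i_\rho:\rho>0\}$, $\{h^j_\rho:\rho>0\}$ be families of smoothing functions of $g_i$ and $h_j$ respectively. Let $\{x_k\}\subset\mathbb{R}^n$ be a sequence, let $\rho_k>0$ with $\rho_k\uparrow\infty$, and let $\bar x$ be an accumulation point of $\{x_k\}$. Then the EWGMFCQ holds at $\bar x$ if and only if the EWNNAMCQ holds at $\bar x$ (both based on the given smoothing functions and the given sequences $\{x_k\}$, $\{\rho_k\}$).
   Context: A family $\{g_\rho:\rho>0\}$ of continuously differentiable functions $g_\rho:\mathbb{R}^n\to\mathbb{R}$ is a family of smoothing functions of a locally Lipschitz $g$ if $\lim_{z\to x,\ \rho\uparrow\infty} g_\rho(z)=g(x)$ for every $x\in\mathbb{R}^n$. Throughout, ''subsequence index sets'' $K_0\subset K\subset\mathbb{N}$ are infinite. Call a pair $K_0\subset K\subset\mathbb{N}$ admissible at $\bar x$ if $\lim_{k\to\infty,k\in K}x_k=\bar x$ and the limits $v_i=\lim_{k\to\infty,k\in K_0}\nabla g^i_{\rho_k}(x_k)$ ($i=1,\dots,p$) and $v_j=\lim_{k\to\infty,k\in K_0}\nabla h^j_{\rho_k}(x_k)$ ($j=p+1,\dots,q$) exist. EWNNAMCQ holds at $\bar x$ if for every admissible pair with limits $v_1,\dots,v_q$: whenever $\lambda\in\mathbb{R}^q$ satisfies $0=\sum_{i=1}^p\lambda_i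 v_i+\sum_{j=p+1}^q\lambda_j v_j$, $\lambda_i\ge 0$ ($i=1,\dots,p$), and $\sum_{i=1}^p\lambda_i g_i(\bar x)+\sum_{j=p+1}^q\lambda_j h_j(\bar x)\ge 0$, then $\lambda=0$. EWGMFCQ holds at $\bar x$ if for every admissible pair with limits $v_1,\dots,v_q$: (i) $v_{p+1},\dots,v_q$ are linearly independent; and (ii) there exists a direction $d\in\mathbb{R}^n$ such that $g_i(\bar x)+v_i^Td<0$ for all $i=1,\dots,p$ and $h_j(\bar x)+v_j^Td=0$ for all $j=p+1,\dots,q$. *)

From HB Require Import structures.
From mathcomp Require Import all_boot all_order all_algebra.
From mathcomp Require Import all_classical all_reals all_analysis.
Set Implicit Arguments. Unset Strict Implicit. Unset Printing Implicit Defensive.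
Import Order.TTheory GRing.Theory Num.Theory.
Import numFieldNormedType.Exports.
Local Open Scope classical_set_scope.
Local Open Scope ring_scope.

Section Defs.
Variables (R : realType) (n : nat).
Notation V := 'rV[R]_n.

Definition dotv (u v : V) : R := \sum_(k < n) u 0 k * v 0 k.

Definition grad (f : V -> R) (x : V) : V :=
  \row_(i < n) 'D_(delta_mx 0 i) f x.

Definition C1 (f : V -> R) : Prop :=
  (forall x, differentiable f x) /\ continuous (grad f).

Definition locally_lipschitz (f : V -> R) : Prop :=
  forall x, exists r : R, exists L : R, 0 < r /\
    forall y z, `|y - x| < r -> `|z - x| < r -> `|f y - f z| <= L * `|y - z|.

Definition smoothing_family (fs : R -> V -> R) (f : V -> R) : Prop :=
  (forall rho, 0 < rho -> C1 (fs rho)) /\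
  (forall x (eps : R), 0 < eps -> exists delta : R, exists M : R, 0 < delta /\
     forall z rho, `|z - x| < delta -> M < rho -> 0 < rho ->
       `|fs rho z - f x| < eps).

Definition lim_along {W : normedModType R} (K : set nat) (u : nat -> W) (l : W)
  : Prop :=
  forall eps : R, 0 < eps -> exists N : nat, forall k, K k -> (N <= k)%N ->
    `|u k - l| < eps.

Definition accumulation_point (x : nat -> V) (xbar : V) : Prop :=
  forall eps : R, 0 < eps -> forall N : nat, exists k, (N <= k)%N /\
    `|x k - xbar| < eps.

Definition admissible (p m : nat) (gs : 'I_p -> R -> V -> R)
  (hs : 'I_m -> R -> V -> R) (x : nat -> V) (rho : nat -> R) (xbar : V)
  (K0 K : set nat) (vg : 'I_p -> V) (vh : 'I_m -> V) : Prop :=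
  infinite_set K0 /\ infinite_set K /\ K0 `<=` K /\
  lim_along K x xbar /\
  (forall i, lim_along K0 (fun k => grad (gs i (rho k)) (x k)) (vg i)) /\
  (forall j, lim_along K0 (fun k => grad (hs j (rho k)) (x k)) (vh j)).

Definition EWNNAMCQ (p m : nat) (g : 'I_p -> V -> R) (h : 'I_m -> V -> R)
  (gs : 'I_p -> R -> V -> R) (hs : 'I_m -> R -> V -> R)
  (x : nat -> V) (rho : nat -> R) (xbar : V) : Prop :=
  forall K0 K vg vh, admissible gs hs x rho xbar K0 K vg vh ->
  forall (lg : 'I_p -> R) (lh : 'I_m -> R),
    \sum_(i < p) lg i *: vg i + \sum_(j < m) lh j *: vh j = 0 ->
    (forall i, 0 <= lg i) ->
    0 <= \sum_(i < p) lg i * g i xbar + \sum_(j < m) lh j * h j xbar ->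
    (forall i, lg i = 0) /\ (forall j, lh j = 0).

Definition EWGMFCQ (p m : nat) (g : 'I_p -> V -> R) (h : 'I_m -> V -> R)
  (gs : 'I_p -> R -> V -> R) (hs : 'I_m -> R -> V -> R)
  (x : nat -> V) (rho : nat -> R) (xbar : V) : Prop :=
  forall K0 K vg vh, admissible gs hs x rho xbar K0 K vg vh ->
    row_free (\matrix_(j < m) vh j) /\
    exists d : V,
      (forall i, g i xbar + dotv (vg i) d < 0) /\
      (forall j, h j xbar + dotv (vh j) d = 0).

End Defs.

From HB Require Import structures.
From mathcomp Require Import all_boot all_order all_algebra.
From mathcomp Require Import all_classical all_reals all_analysis.
From mathcomp Require Import ring lra.
Import Order.TTheory GRing.Theory Num.Theory.
Local Open Scope ring_scope.
Set Implicit Arguments. Unset Strict Implicit.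

(* Both qualifications quantify over the same admissible pairs, and for each
   pair they only involve the limit gradients and the constraint values at
   xbar.  For fixed vectors it is Motzkin's
   theorem of the alternative: GMFCQ asks for a solution d of a mixed
   strict/non-strict linear system, and NNAMCQ excludes exactly the
   nonnegative multipliers that certify its infeasibility.  The nontrivial
   direction comes from Fourier-Motzkin elimination: eliminating a variable
   pairs every upper bound on it with every lower bound, and an infeasible
   system ends with a positive combination of its constraints whose
   coefficients all vanish and whose constant is contradictory. *)

Section FourierMotzkin.
Variable R : realFieldType.

(* The constraint [const + coef . d < 0], non-strict when [weak].  Coefficients
   are indexed by [nat] so that one type serves every dimension: [dotn n]
   only reads the first [n] of them. *)
Record constraint := Constraint { coef : nat -> R; const : R; weak : bool }.

Definition dotn n (c d : nat -> R) : R := \sum_(k < n) c k * d k.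
Definition eval n d k := const k + dotn n (coef k) d.
Definition holds n d k := eval n d k < 0 ?<= if weak k.
Definition feasible n l := exists d, forall k, List.In k l -> holds n d k.

Definition addc k t := Constraint (fun i => coef k i + coef t i)
  (const k + const t) (weak k && weak t).
Definition scalec r k := Constraint (fun i => r * coef k i) (r * const k) (weak k).
Definition zeroc := Constraint (fun _ => 0) 0 true.

Inductive cone (l : list constraint) : constraint -> Prop :=
| cone0 : cone l zeroc
| coneS k t r : List.In k l -> 0 < r -> cone l t -> cone l (addc (scalec r k) t).

Lemma constraint_ext k t :
  coef k =1 coef t -> const k = const t -> weak k = weak t -> k = t.
Proof. by case: k => c a s; case: t => c' a' s' /= /boolp.funext -> -> ->. Qed.

Lemma cone_in l k : List.In k l -> cone l k.
Proof.
move=> lk; have -> : k = addc (scalec 1 k) zeroc.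
  by apply: constraint_ext => [i||] /=; rewrite ?mul1r ?addr0 ?andbT.
exact: coneS lk ltr01 (cone0 l).
Qed.

Lemma cone_add l t1 t2 : cone l t1 -> cone l t2 -> cone l (addc t1 t2).
Proof.
move=> + l_t2; elim=> [|k t r lk r0 _ IH].
  by have -> : addc zeroc t2 = t2 by apply: constraint_ext => [i||] /=; rewrite ?add0r.
have -> : addc (addc (scalec r k) t) t2 = addc (scalec r k) (addc t t2).
  by apply: constraint_ext => [i||] /=; rewrite ?addrA ?andbA.
exact: coneS.
Qed.

Lemma cone_scale l t r : 0 < r -> cone l t -> cone l (scalec r t).
Proof.
move=> r0; elim=> [|k t' r' lk r'0 _ IH].
  have -> : scalec r zeroc = zeroc by apply: constraint_ext => [i||] /=; rewrite ?mulr0.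
  exact: cone0.
have -> : scalec r (addc (scalec r' k) t') = addc (scalec (r * r') k) (scalec r t').
  by apply: constraint_ext => [i||] /=; rewrite ?mulrDr ?mulrA.
by apply: coneS => //; exact: mulr_gt0.
Qed.

Lemma cone_trans l l' t :
  (forall k, List.In k l' -> cone l k) -> cone l' t -> cone l t.
Proof.
move=> ll'; elim=> [|k t' r lk r0 _ IH]; first exact: cone0.
by apply: cone_add => //; apply: cone_scale => //; exact: ll'.
Qed.

Lemma cone_coef0 l t i :
  (forall k, List.In k l -> coef k i = 0) -> cone l t -> coef t i = 0.
Proof. by move=> li; elim=> [|k t' r lk _ _ IH] //=; rewrite IH li // mulr0 addr0. Qed.

Lemma dotnD n (a b : R) c c' d :
  dotn n (fun i => a * c i + b * c' i) d = a * dotn n c d + b * dotn n c' d.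
Proof. by rewrite /dotn !mulr_sumr -big_split; apply: eq_bigr => i _ /=; ring. Qed.

Lemma list_argmax (A : Type) (f : A -> R) (x : A) s :
  exists2 y, List.In y (x :: s) & forall z, List.In z (x :: s) -> f z <= f y.
Proof.
elim: s x => [|x' s IH] x.
  by exists x => [|z [<-|[]]]; [left|].
have [y ys ymax] := IH x'.
have [fxy|fyx] := leP (f x) (f y).
  by exists y => [|z [<-|zs]]; [right|exact: fxy|exact: ymax].
by exists x => [|z [<-|zs]]; [left|exact: lexx|exact: le_trans (ymax _ zs) (ltW fyx)].
Qed.

Lemma exists_between (A : Type) (P N : list A) (L U : A -> R) (w : A -> bool) :
  (forall p q, List.In p P -> List.In q N -> L q < U p ?<= if w p && w q) ->
  exists t, (forall p, List.In p P -> t < U p ?<= if w p) /\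
            (forall q, List.In q N -> L q < t ?<= if w q).
Proof.
case: P => [|p1 P] LU; case: N LU => [|q1 N] LU.
- by exists 0.
- have [q0 _ q0max] := list_argmax L q1 N.
  by exists (L q0 + 1); split => // q /q0max; case: (w q) => /=; lra.
- have [p0 _ p0min] := list_argmax (fun p => - U p) p1 P.
  by exists (U p0 - 1); split => // p /p0min; case: (w p) => /=; lra.
have [q0 q0N q0max] := list_argmax L q1 N.
have [p0 p0P p0min] := list_argmax (fun p => - U p) p1 P.
have /lteifW Lq0Up0 := LU _ _ p0P q0N.
exists ((L q0 + U p0) / 2); split.
  move=> p pP; have := p0min _ pP; have := LU _ _ pP q0N.
  by case: (w p) (w q0) => -[] /=; lra.
move=> q qN; have := q0max _ qN; have := LU _ _ p0P qN.
by case: (w p0) (w q) => -[] /=; lra.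
Qed.

Section Elimination.
Variable n : nat.

Definition free_of l := List.filter (fun k => coef k n == 0) l.
Definition upper_bounds l := List.filter (fun k => 0 < coef k n) l.
Definition lower_bounds l := List.filter (fun k => coef k n < 0) l.
Definition eliminate_pair p q := addc (scalec (- coef q n) p) (scalec (coef p n) q).
Definition eliminate l := free_of l ++
  List.flat_map (fun p => List.map (eliminate_pair p) (lower_bounds l)) (upper_bounds l).

Lemma cone_eliminate l k : List.In k (eliminate l) -> cone l k.
Proof.
rewrite List.in_app_iff => -[/List.filter_In [lk _]|]; first exact: cone_in.
case/List.in_flat_map => p [/List.filter_In [lp p0] /List.in_map_iff [q [<-]]].
case/List.filter_In => lq q0.
by apply: cone_add; apply: cone_scale; rewrite ?oppr_gt0 //; exact: cone_in.
Qed.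

Lemma coef_eliminate l k : List.In k (eliminate l) -> coef k n = 0.
Proof.
rewrite List.in_app_iff => -[/List.filter_In [_ /eqP //]|].
case/List.in_flat_map => p [_ /List.in_map_iff [q [<- _]]] /=.
by rewrite mulNr mulrC addNr.
Qed.

Lemma eval_eliminate_pair d p q :
  eval n d (eliminate_pair p q) = - coef q n * eval n d p + coef p n * eval n d q.
Proof. by rewrite /eval /= dotnD; ring. Qed.

Lemma eval_extend d t k :
  eval n.+1 (fun i => if i == n then t else d i) k = eval n d k + coef k n * t.
Proof.
rewrite /eval /dotn big_ord_recr /= eqxx addrA; congr (_ + _ + _).
by apply: eq_bigr => i _; rewrite ltn_eqF.
Qed.

Lemma feasible_eliminate l : feasible n (eliminate l) -> feasible n.+1 l.
Proof.
move=> [d dsat].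
(* Bounds on the new coordinate; the pairs in [eliminate l] say that every
   lower bound lies below every upper bound. *)
pose U p := - eval n d p / coef p n.
pose L q := eval n d q / - coef q n.
have [|t [tU tL]] := @exists_between _ (upper_bounds l) (lower_bounds l) L U weak.
  move=> p q pP qN.
  have pq : List.In (eliminate_pair p q) (eliminate l).
    rewrite List.in_app_iff; right; apply/List.in_flat_map; exists p; split => //.
    by apply/List.in_map_iff; exists q.
  move: pP qN (dsat _ pq) => /List.filter_In [_ p0] /List.filter_In [_].
  rewrite -oppr_gt0 => q0.
  rewrite /holds eval_eliminate_pair /= /L /U lteif_pdivrMr // mulrAC lteif_pdivlMr //.
  move=> pq_holds; rewrite -subr_lteifr0 mulNr opprK.
  by rewrite addrC mulrC [eval n d q * _]mulrC.
exists (fun i => if i == n then t else d i) => k lk.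
rewrite /holds eval_extend; case: (ltrgt0P (coef k n)) => k0.
- have := tU k (proj2 (List.filter_In _ _ _) (conj lk k0)).
  by rewrite /U lteif_pdivlMr // lteifNr -subr_lteifr0 opprK mulrC.
- have := tL k (proj2 (List.filter_In _ _ _) (conj lk k0)).
  rewrite /L -oppr_gt0 in k0.
  by rewrite lteif_pdivrMr // mulrN -subr_lteifr0 opprK mulrC.
- rewrite k0 mul0r addr0; apply: dsat.
  by rewrite List.in_app_iff; left; apply/List.filter_In; rewrite k0 eqxx.
Qed.
End Elimination.

Theorem fourier_motzkin n l : ~ feasible n l ->
  exists t, [/\ cone l t, forall i, (i < n)%N -> coef t i = 0
               & 0 < const t ?<= if ~~ weak t].
Proof.
elim: n l => [|n IH] l infeas.
  have [k lk k_fails] : exists2 k, List.In k l & ~ holds 0 (fun=> 0) k.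
    apply: contrapT => all_hold; apply: infeas; exists (fun=> 0) => k lk.
    by apply: contrapT => k_fails; apply: all_hold; exists k.
  exists k; split => //; first exact: cone_in.
  by move: k_fails; rewrite /holds /eval /dotn big_ord0 addr0 lteifNE => /negP.
have [feas|/IH [t [elim_t t0 tabsurd]]] :=
  boolp.pselect (feasible n (eliminate n l)).
  by case: infeas; exact: feasible_eliminate.
exists t; split => //; first exact: cone_trans (@cone_eliminate n l) elim_t.
move=> i; rewrite ltnS leq_eqVlt => /orP [/eqP ->|]; last exact: t0.
exact: cone_coef0 (@coef_eliminate n l) elim_t.
Qed.
End FourierMotzkin.

Lemma In_enum (T : finType) (x : T) : List.In x (enum T).
Proof.
have : x \in enum T by rewrite mem_enum.
by elim: (enum T) => //= y s IH; rewrite inE => /orP [/eqP ->|/IH]; [left|right].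
Qed.

Lemma row_free_rowsP (F : fieldType) (n m : nat) (v : 'I_m -> 'rV[F]_n) :
  row_free (\matrix_j v j) <->
  (forall c : 'I_m -> F, \sum_j c j *: v j = 0 -> forall j, c j = 0).
Proof.
have mulE c : (\row_j c j) *m (\matrix_j v j) = \sum_j c j *: v j.
  by rewrite mulmx_sum_row; apply: eq_bigr => j _; rewrite rowK mxE.
split=> [vfree c | vinj].
  rewrite -mulE -(mul0mx _ (\matrix_j v j)) => /(row_free_inj vfree) /rowP c0 j.
  by have := c0 j; rewrite !mxE.
apply: inj_row_free => u u0; apply/rowP => j; rewrite mxE.
apply: (vinj (fun j => u 0 j)); rewrite -mulE -u0; congr (_ *m _).
by apply/rowP => k; rewrite mxE.
Qed.

Lemma sum_bump (K : pzRingType) (V : lmodType K) (I : finType)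
    (f : I -> K) (F : I -> V) i0 r :
  \sum_i (f i + (if i == i0 then r else 0)) *: F i = \sum_i f i *: F i + r *: F i0.
Proof.
under eq_bigr do rewrite scalerDl; rewrite big_split /=; congr (_ + _).
by rewrite (bigD1 i0) //= eqxx big1 ?addr0 // => i /negbTE ->; rewrite scale0r.
Qed.

Lemma sum_bumpr (K : pzRingType) (I : finType) (f F : I -> K) i0 r :
  \sum_i (f i + (if i == i0 then r else 0)) * F i = \sum_i f i * F i + r * F i0.
Proof. exact: (sum_bump (V := K^o)). Qed.

Section Dot.
Variables (R : realType) (n : nat).
Implicit Types u v d : 'rV[R]_n.

Lemma dotvDl u v d : dotv (u + v) d = dotv u d + dotv v d.
Proof. by rewrite /dotv -big_split; apply: eq_bigr => k _; rewrite mxE mulrDl. Qed.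

Lemma dotv0l d : dotv 0 d = 0.
Proof. by rewrite /dotv big1 // => k _; rewrite mxE mul0r. Qed.

Lemma dotvNl v d : dotv (- v) d = - dotv v d.
Proof. by rewrite /dotv -sumrN; apply: eq_bigr => k _; rewrite mxE mulNr. Qed.

Lemma dotv_suml (I : finType) (c : I -> R) (w : I -> 'rV[R]_n) d :
  dotv (\sum_i c i *: w i) d = \sum_i c i * dotv (w i) d.
Proof.
rewrite /dotv; under eq_bigr do rewrite summxE mulr_suml.
rewrite exchange_big; apply: eq_bigr => i _; rewrite mulr_sumr.
by apply: eq_bigr => k _; rewrite mxE mulrA.
Qed.

Definition row_coefs v (k : nat) : R := if insub k is Some i then v 0 i else 0.

Lemma row_coefsE v (i : 'I_n) : row_coefs v i = v 0 i.
Proof. by rewrite /row_coefs valK. Qed.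

Lemma dotn_row_coefs v (d : nat -> R) : dotn n (row_coefs v) d = dotv v (\row_k d k).
Proof. by apply: eq_bigr => i _; rewrite mxE row_coefsE. Qed.
End Dot.

Section MotzkinAlternative.
Variables (R : realType) (n p m : nat).
Variables (vg : 'I_p -> 'rV[R]_n) (vh : 'I_m -> 'rV[R]_n).
Variables (a : 'I_p -> R) (b : 'I_m -> R).

Definition nnamcq := forall (lg : 'I_p -> R) (lh : 'I_m -> R),
  \sum_(i < p) lg i *: vg i + \sum_(j < m) lh j *: vh j = 0 ->
  (forall i, 0 <= lg i) ->
  0 <= \sum_(i < p) lg i * a i + \sum_(j < m) lh j * b j ->
  (forall i, lg i = 0) /\ (forall j, lh j = 0).

Definition gmfcq := row_free (\matrix_(j < m) vh j) /\
  exists d : 'rV[R]_n,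
    (forall i, a i + dotv (vg i) d < 0) /\ (forall j, b j + dotv (vh j) d = 0).

Lemma gmfcq_nnamcq : gmfcq -> nnamcq.
Proof.
move=> [vh_free [d [gd hd]]] lg lh sum0 lg_ge0 ab_ge0.
have lgb : \sum_i lg i * dotv (vg i) d = \sum_j lh j * b j.
  have := congr1 (fun v => dotv v d) sum0; rewrite dotvDl !dotv_suml dotv0l => /eqP.
  rewrite addr_eq0 => /eqP ->; rewrite -sumrN; apply: eq_bigr => j _.
  by have /eqP := hd j; rewrite addr_eq0 => /eqP ->; rewrite mulrN.
have terms_le0 i : lg i * (a i + dotv (vg i) d) <= 0.
  by rewrite mulr_ge0_le0 // ltW.
have lg0 i : lg i = 0.
  have /eqP : \sum_i lg i * (a i + dotv (vg i) d) = 0.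
    apply/eqP; rewrite eq_le sumr_le0 //=.
    by under eq_bigr do rewrite mulrDr; rewrite big_split /= lgb.
  rewrite -oppr_eq0 -sumrN psumr_eq0; last by move=> k _; rewrite oppr_ge0.
  move=> /allP /(_ i (mem_index_enum i)); rewrite oppr_eq0 mulf_eq0 => /orP [/eqP //|].
  by rewrite (negbTE (ltr0_neq0 (gd i))).
split=> //; apply: (proj1 (row_free_rowsP vh) vh_free); rewrite -[RHS]sum0.
by rewrite [X in _ = X + _]big1 ?add0r // => i _; rewrite lg0 scale0r.
Qed.

Lemma nnamcq_row_free : nnamcq -> row_free (\matrix_(j < m) vh j).
Proof.
move=> cq; apply/row_free_rowsP.
suff cb_ge0 c : \sum_j c j *: vh j = 0 -> 0 <= \sum_j c j * b j -> forall j, c j = 0.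
  move=> c c0; have [|cb] := leP 0 (\sum_j c j * b j); first exact: cb_ge0.
  move=> j; apply: oppr_inj; rewrite oppr0; apply: (cb_ge0 (fun j => - c j)).
    by under eq_bigr do rewrite scaleNr; rewrite sumrN c0 oppr0.
  by under eq_bigr do rewrite mulNr; rewrite sumrN oppr_ge0 ltW.
move=> c0 cb; apply: (proj2 (cq (fun=> 0) c _ (fun=> lexx 0) _)).
  by rewrite big1 ?add0r // => i _; rewrite scale0r.
by rewrite big1 ?add0r // => i _; rewrite mul0r.
Qed.

Definition mfcq_constraints : list (constraint R) :=
  List.map (fun i => Constraint (row_coefs (vg i)) (a i) false) (enum 'I_p) ++
  List.map (fun j => Constraint (row_coefs (vh j)) (b j) true) (enum 'I_m) ++
  List.map (fun j => Constraint (row_coefs (- vh j)) (- b j) true) (enum 'I_m).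

Lemma feasible_mfcq : feasible n mfcq_constraints ->
  exists d : 'rV[R]_n,
    (forall i, a i + dotv (vg i) d < 0) /\ (forall j, b j + dotv (vh j) d = 0).
Proof.
move=> [d dsat]; exists (\row_k d k); split => [i|j].
  have := dsat (Constraint (row_coefs (vg i)) (a i) false).
  rewrite /holds /eval /= dotn_row_coefs; apply; apply/List.in_app_iff; left.
  exact: List.in_map (In_enum i).
have := dsat (Constraint (row_coefs (vh j)) (b j) true).
have := dsat (Constraint (row_coefs (- vh j)) (- b j) true).
rewrite /holds /eval /= !dotn_row_coefs dotvNl -opprD oppr_le0 => hge hle.
apply/eqP; rewrite eq_le hle ?hge //; apply/List.in_app_iff; right.
  by apply/List.in_app_iff; right; exact: List.in_map (In_enum j).
by apply/List.in_app_iff; left; exact: List.in_map (In_enum j).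
Qed.

Lemma cone_mfcq_multipliers t : cone mfcq_constraints t ->
  exists (lg : 'I_p -> R) (lh : 'I_m -> R),
  [/\ forall i, 0 <= lg i,
      forall k : 'I_n, coef t k = (\sum_i lg i *: vg i + \sum_j lh j *: vh j) 0 k,
      const t = \sum_i lg i * a i + \sum_j lh j * b j
    & ~~ weak t -> exists i, 0 < lg i].
Proof.
elim=> [|k0 t' r k0_in r0 _ [lg [lh [lg0 tcoef tconst tweak]]]].
  exists (fun=> 0), (fun=> 0); split => // [k|].
    by rewrite !big1 ?mxE ?addr0 // => *; rewrite scale0r.
  by rewrite !big1 ?addr0 // => *; rewrite mul0r.
move: k0_in; rewrite !List.in_app_iff => -[|[]] /List.in_map_iff [l [<- _]].
- exists (fun i => lg i + (if i == l then r else 0)), lh; split => [i|k||].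
  + by rewrite addr_ge0 //; case: eqP => // _; exact: ltW.
  + by rewrite /= sum_bump tcoef row_coefsE !mxE; ring.
  + by rewrite /= sum_bumpr tconst; ring.
  + by move=> _; exists l; rewrite eqxx ltr_wpDl.
- exists lg, (fun j => lh j + (if j == l then r else 0)); split => // [k|].
  + by rewrite /= sum_bump tcoef row_coefsE !mxE; ring.
  + by rewrite /= sum_bumpr tconst; ring.
- exists lg, (fun j => lh j + (if j == l then - r else 0)); split => // [k|].
  + by rewrite /= sum_bump tcoef row_coefsE !mxE; ring.
  + by rewrite /= sum_bumpr tconst; ring.
Qed.

Lemma nnamcq_gmfcq : nnamcq -> gmfcq.
Proof.
move=> cq; split; first exact: nnamcq_row_free.
apply: feasible_mfcq; apply: contrapT => /fourier_motzkin [t [t_cone t0 tabsurd]].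
have [lg [lh [lg0 tcoef tconst tweak]]] := cone_mfcq_multipliers t_cone.
have [lg_eq0 lh_eq0] : (forall i, lg i = 0) /\ (forall j, lh j = 0).
  apply: cq => //; last by rewrite -tconst (lteifW tabsurd).
  by apply/rowP => k; rewrite -tcoef t0 ?mxE.
have const0 : const t = 0.
  by rewrite tconst !big1 ?addr0 // => *; rewrite (lg_eq0, lh_eq0) mul0r.
by move: tabsurd; rewrite const0 lteifxx => /tweak [i]; rewrite lg_eq0 ltxx.
Qed.
End MotzkinAlternative.

Unset Implicit Arguments. Set Strict Implicit.

Theorem theorem2p2 (R : realType) (n p m : nat)
  (g : 'I_p -> 'rV[R]_n -> R) (h : 'I_m -> 'rV[R]_n -> R)
  (gs : 'I_p -> R -> 'rV[R]_n -> R) (hs : 'I_m -> R -> 'rV[R]_n -> R)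
  (x : nat -> 'rV[R]_n) (rho : nat -> R) (xbar : 'rV[R]_n) :
  (forall i, locally_lipschitz (g i)) ->
  (forall j, locally_lipschitz (h j)) ->
  (forall i, smoothing_family (gs i) (g i)) ->
  (forall j, smoothing_family (hs j) (h j)) ->
  (forall k, 0 < rho k) ->
  (forall k, rho k <= rho k.+1) ->
  (forall M : R, exists N : nat, forall k, (N <= k)%N -> M < rho k) ->
  accumulation_point x xbar ->
  (EWGMFCQ g h gs hs x rho xbar <-> EWNNAMCQ g h gs hs x rho xbar).
Proof.
move=> *; split=> cq K0 K vg vh adm.
  exact: gmfcq_nnamcq (cq _ _ _ _ adm).
exact: nnamcq_gmfcq (cq _ _ _ _ adm).
Qed.
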